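(* Consider the system $\dot{x} = A x + B u$, $y = h(x)$, with $x \in \mathbb{R}^n$, $u \in \mathbb{R}^p$, $y \in \mathbb{R}^m$, where $h:\mathbb{R}^n\to\mathbb{R}^m$ is a (possibly nonlinear) output function and the pair $(A,B)$ is controllable. Let $Q = Q^T \succ 0$ and $R = R^T \succ 0$, and let $P \succ 0$ be the positive definite solution of the algebraic Riccati equation $Q + A^T P + P A - P B R^{-1} B^T P = 0$. Define the feedback $$u(x) = -\left[R^{-1} + S(x)\right] B^T P x,$$ where $S(x)$ is the $p\times p$ diagonal matrix with diagonal entries $$S_{ii}(x) = k_{1_i}\, e^{-\frac{k_{2_i}}{\|x\|}} \sin^2\!\big(k_{3_i}\|x\| + k_{4_i}\big),\qquad k_{1_i} \ge 0,\ \ k_{4_i} \in [0,\tfrac{\pi}{2}),\ \ i = 1,\dots,p.$$ Then this control asymptotically stabilizes the system (i.e., the origin of the closed-loop system is asymptotically stable).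
   Context: $k_{2_i}, k_{3_i}$ are real parameters of the feedback; $\|\cdot\|$ is the Euclidean norm. *)

From HB Require Import structures.
From mathcomp Require Import all_boot all_order all_algebra.
From mathcomp Require Import all_classical all_reals all_analysis.
Set Implicit Arguments. Unset Strict Implicit. Unset Printing Implicit Defensive.
Import Order.TTheory GRing.Theory Num.Theory.
Import numFieldNormedType.Exports.
Local Open Scope ring_scope.
Local Open Scope classical_set_scope.

Definition enorm {R : realType} {n : nat} (x : 'cV[R]_n) : R :=
  Num.sqrt (\sum_(i < n) x i 0 ^+ 2).

Definition posdef {R : realType} {n : nat} (M : 'M[R]_n) : Prop :=
  M^T = M /\ forall x : 'cV[R]_n, x != 0 -> 0 < (x^T *m M *m x) 0 0.

Definition ctrb_mx {R : realType} {n p : nat} (A : 'M[R]_n) (B : 'M[R]_(n, p)) :=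
  \mxrow_(k < n) (A ^+ k *m B).

Definition controllable {R : realType} {n p : nat} (A : 'M[R]_n) (B : 'M[R]_(n, p)) :
  Prop := \rank (ctrb_mx A B) = n.

(* The gain matrix S(x) = diag(k1_i exp(-k2_i/||x||) sin^2(k3_i ||x|| + k4_i)).
   (At x = 0 the Rocq convention 1/0 = 0 makes S(0) finite; it is irrelevant
    since S(x) multiplies B^T P x.) *)
Definition Sgain {R : realType} {n p : nat} (k1 k2 k3 k4 : 'I_p -> R)
  (x : 'cV[R]_n) : 'M[R]_p :=
  diag_mx (\row_(i < p) (k1 i * expR (- (k2 i / enorm x))
                          * (sin (k3 i * enorm x + k4 i)) ^+ 2)).

Definition feedback {R : realType} {n p : nat} (Rw : 'M[R]_p) (B : 'M[R]_(n, p))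
  (P : 'M[R]_n) (k1 k2 k3 k4 : 'I_p -> R) (x : 'cV[R]_n) : 'cV[R]_p :=
  - ((invmx Rw + Sgain k1 k2 k3 k4 x) *m B^T *m P *m x).

Definition is_solution {R : realType} {n : nat} (f : 'cV[R]_n -> 'cV[R]_n)
  (x : R -> 'cV[R]_n) : Prop :=
  {within `[0, +oo[, continuous x} /\
  forall t : R, 0 < t -> derivable x t 1 /\ 'D_1 x t = f (x t).

Definition asymptotically_stable {R : realType} {n : nat}
  (f : 'cV[R]_n -> 'cV[R]_n) : Prop :=
  f 0 = 0 /\
  (forall eps : R, 0 < eps -> exists2 delta : R, 0 < delta &
     forall x : R -> 'cV[R]_n, is_solution f x -> enorm (x 0) < delta ->
       forall t : R, 0 <= t -> enorm (x t) < eps) /\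
  (exists2 delta : R, 0 < delta &
     forall x : R -> 'cV[R]_n, is_solution f x -> enorm (x 0) < delta ->
       enorm (x t) @[t --> +oo] --> (0 : R)).

From HB Require Import structures.
From mathcomp Require Import all_boot all_order all_algebra.
From mathcomp Require Import all_classical all_reals all_analysis.
From mathcomp Require Import ring lra.

(* With [z = B^T P x], the Riccati equation turns the derivative of
   [V(x) = x^T P x] along the closed loop into
   [-x^T Q x - z^T R^-1 z - 2 z^T S(x) z], and the last two terms are
   nonnegative since [R] is positive definite and [S(x)] is diagonal with
   entries [k1 e^(...) sin^2(...) >= 0].  Comparing the quadratic forms of [Q]
   and [P] on the (compact) unit sphere gives [V' <= -c V], so [V], and with
   it [||x||], decays exponentially along every solution. *)

Set Implicit Arguments.
Unset Strict Implicit.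
Unset Printing Implicit Defensive.

Import Order.TTheory GRing.Theory Num.Theory.
Import numFieldNormedType.Exports.
Local Open Scope ring_scope.
Local Open Scope classical_set_scope.

Lemma continuous_sum (T : topologicalType) (R : realType) (I : Type) (s : seq I)
    (f : I -> T -> R) :
  (forall i, continuous (f i)) -> continuous (fun t => \sum_(i <- s) f i t).
Proof.
move=> cf; elim: s => [|a s IHs].
  by under eq_fun do rewrite big_nil; exact: cst_continuous.
under eq_fun do rewrite big_cons.
by move=> t; apply: continuousD; [exact: cf | exact: IHs].
Qed.

Section QuadraticForm.
Variables (R : realType) (n : nat).
Implicit Types (M N : 'M[R]_n) (x y : 'cV[R]_n).

Definition qform M x : R := (x^T *m M *m x) 0 0.

Lemma form_mxE M x y :
  (x^T *m M *m y) 0 0 = \sum_i \sum_j x i 0 * M i j * y j 0.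
Proof.
rewrite mxE; under eq_bigr do rewrite mxE big_distrl /=.
rewrite exchange_big; apply: eq_bigr => i _; apply: eq_bigr => j _.
by rewrite !mxE.
Qed.

Lemma form_mx_sym M x y : M^T = M -> (x^T *m M *m y) 0 0 = (y^T *m M *m x) 0 0.
Proof.
move=> MT; have -> : (x^T *m M *m y) 0 0 = (x^T *m M *m y)^T 0 0 by rewrite [RHS]mxE.
by rewrite !trmx_mul trmxK MT mulmxA.
Qed.

Lemma qformE M x : qform M x = \sum_i \sum_j x i 0 * M i j * x j 0.
Proof. exact: form_mxE. Qed.

Lemma qform0 M : qform M 0 = 0.
Proof. by rewrite /qform mulmx0 mxE. Qed.

Lemma qformZ M a x : qform M (a *: x) = a ^+ 2 * qform M x.
Proof. by rewrite /qform -scalemxAr [(a *: x)^T]linearZ -!scalemxAl !mxE mulrA expr2. Qed.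

Lemma qformD M N x : qform (M + N) x = qform M x + qform N x.
Proof. by rewrite /qform mulmxDr mulmxDl mxE. Qed.

Lemma qformN M x : qform (- M) x = - qform M x.
Proof. by rewrite /qform mulmxN mulNmx mxE. Qed.

Lemma qform_trmx M x : qform M^T x = qform M x.
Proof.
have -> : qform M x = (x^T *m M *m x)^T 0 0 by rewrite [RHS]mxE.
by rewrite !trmx_mul trmxK mulmxA.
Qed.

Lemma enorm_sqr x : enorm x ^+ 2 = qform 1%:M x.
Proof.
rewrite /enorm sqr_sqrtr ?sumr_ge0// => [|i _]; last exact: sqr_ge0.
by rewrite /qform mulmx1 mxE; apply: eq_bigr => i _; rewrite mxE expr2.
Qed.

Lemma enorm_ge0 x : 0 <= enorm x.
Proof. exact: sqrtr_ge0. Qed.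

Lemma enorm_eq0 x : enorm x = 0 -> x = 0.
Proof.
rewrite /enorm => /eqP; rewrite sqrtr_eq0 le_eqVlt ltNge sumr_ge0 ?orbF /=.
- move=> /eqP/psumr_eq0P sq0; apply/matrixP => i j; rewrite (ord1 j) mxE.
  by apply/eqP; rewrite -sqrf_eq0 sq0// => k _; exact: sqr_ge0.
- by move=> i _; exact: sqr_ge0.
Qed.

Lemma enormZ a x : enorm (a *: x) = `|a| * enorm x.
Proof.
apply/eqP; rewrite -(@eqrXn2 _ 2)// ?mulr_ge0 ?enorm_ge0//.
by rewrite exprMn real_normK ?num_real// !enorm_sqr qformZ.
Qed.

Lemma qform_sphere_decomp M x : x != 0 ->
  exists2 y, enorm y = 1 & qform M x = enorm x ^+ 2 * qform M y.
Proof.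
move=> x0; have nx0 : enorm x != 0 by apply: contra_neq x0; exact: enorm_eq0.
exists ((enorm x)^-1 *: x).
  by rewrite enormZ ger0_norm ?invr_ge0 ?enorm_ge0// mulVf.
by rewrite qformZ mulrA exprVn mulfV ?mul1r// expf_neq0.
Qed.

Lemma continuous_coord_qform (T : topologicalType) M (c : 'I_n -> T -> R) :
  (forall i, continuous (c i)) ->
  continuous (fun t => \sum_i \sum_j c i t * M i j * c j t).
Proof.
move=> cc; apply: continuous_sum => i; apply: continuous_sum => j t.
apply: (@continuousM _ _ (fun t => c i t * M i j) (c j)); last exact: cc.
by apply: (@continuousM _ _ (c i) (fun=> M i j)); [exact: cc | exact: cst_continuous].
Qed.

Lemma continuous_qform M : continuous (qform M).
Proof.
rewrite (funext (qformE M)).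
by apply: continuous_coord_qform => i; exact: coord_continuous.
Qed.

Lemma continuous_qform_trmx M : continuous (fun y : 'rV[R]_n => qform M y^T).
Proof.
have -> : (fun y : 'rV[R]_n => qform M y^T) =
    (fun y : 'rV[R]_n => \sum_i \sum_j y 0 i * M i j * y 0 j).
  by apply/funext => y; rewrite qformE; under eq_bigr do under eq_bigr do rewrite !mxE.
apply: (@continuous_coord_qform 'rV[R]_n M (fun i (y : 'rV[R]_n) => y 0 i)) => i.
exact: coord_continuous.
Qed.

Lemma enorm_qform x : enorm x = Num.sqrt (qform 1%:M x).
Proof. by rewrite -enorm_sqr sqrtr_sqr ger0_norm// enorm_ge0. Qed.

Lemma enorm0 : enorm (0 : 'cV[R]_n) = 0.
Proof. by rewrite enorm_qform qform0 sqrtr0. Qed.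

Lemma coord_le_enorm x i : `|x i 0| <= enorm x.
Proof.
have sq_ge0 k : 0 <= x k 0 ^+ 2 by exact: sqr_ge0.
rewrite /enorm -sqrtr_sqr ler_sqrt ?sumr_ge0// (bigD1 i)//= lerDl.
exact: sumr_ge0.
Qed.

Lemma posdef_qform_ge0 M x : posdef M -> 0 <= qform M x.
Proof. by move=> [_ Mpos]; have [->|/Mpos/ltW//] := eqVneq x 0; rewrite qform0. Qed.

Lemma posdef_unitmx M : posdef M -> M \in unitmx.
Proof.
move=> [_ Mpos]; rewrite unitmxE unitfE; apply/negP => /det0P[v v0 vM].
by have := Mpos v^T; rewrite trmx_eq0 trmxK vM mul0mx mxE ltxx => /(_ v0).
Qed.

Lemma posdef_qform_invmx_ge0 M x : posdef M -> 0 <= qform (invmx M) x.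
Proof.
move=> Mpd; rewrite /qform -mulmxA -{1}(mulKVmx (posdef_unitmx Mpd) x).
by rewrite trmx_mul Mpd.1; exact: posdef_qform_ge0.
Qed.

Lemma qform_diag_mx_ge0 (d : 'rV[R]_n) x : (forall i, 0 <= d 0 i) -> 0 <= qform (diag_mx d) x.
Proof.
move=> d_ge0; rewrite /qform mul_mx_diag mxE; apply: sumr_ge0 => i _.
by rewrite !mxE mulrAC -expr2 mulr_ge0// sqr_ge0.
Qed.

(* The sphere lives in ['rV_n] because [bounded_closed_compact] is stated for
   row vectors only. *)
Definition row_unit_sphere := [set y : 'rV[R]_n | enorm y^T = 1].

Lemma compact_row_unit_sphere : compact row_unit_sphere.
Proof.
apply: bounded_closed_compact.
  have : [bounded z | z in row_unit_sphere]; last exact.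
  rewrite /bounded_near; near=> B => z /= z1.
  rewrite /Num.Def.normr /= mx_normrE; apply: bigmax_le => [|[i j] _ /=].
    by near: B; apply: nbhs_pinfty_ge; exact: num_real.
  have zj1 : `|z i j| <= 1.
    by have := coord_le_enorm z^T j; rewrite (ord1 i) mxE z1.
  apply: le_trans zj1 _; near: B; apply: nbhs_pinfty_ge; exact: num_real.
have -> : row_unit_sphere = (fun z => enorm z^T) @^-1` [set 1] by [].
apply: preimage_closed; last exact: closed_eq.
move=> z _; rewrite (funext (fun z : 'rV[R]_n => enorm_qform z^T)).
apply: continuous_comp; [exact: continuous_qform_trmx | exact: sqrt_continuous].
Unshelve. all: end_near.
Qed.

Lemma qform_ge_of_sphere M c :
  (forall y, enorm y = 1 -> c <= qform M y) -> forall x, c * enorm x ^+ 2 <= qform M x.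
Proof.
move=> Mc x; have [->|/(qform_sphere_decomp M)[y /Mc cy ->]] := eqVneq x 0.
  by rewrite enorm0 qform0 expr0n mulr0.
by rewrite [leRHS]mulrC; apply: ler_wpM2r => //; exact: sqr_ge0.
Qed.

Lemma qform_le_of_sphere M c :
  (forall y, enorm y = 1 -> qform M y <= c) -> forall x, qform M x <= c * enorm x ^+ 2.
Proof.
move=> Mc x; have [->|/(qform_sphere_decomp M)[y /Mc cy ->]] := eqVneq x 0.
  by rewrite enorm0 qform0 expr0n mulr0.
by rewrite [leLHS]mulrC; apply: ler_wpM2r => //; exact: sqr_ge0.
Qed.

Lemma in_row_unit_sphere y : enorm y = 1 -> y^T \in row_unit_sphere.
Proof. by rewrite inE /row_unit_sphere /= trmxK. Qed.

Lemma posdef_qform_lb M :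
  posdef M -> exists2 c, 0 < c & forall x, c * enorm x ^+ 2 <= qform M x.
Proof.
move=> [_ Mpos].
have [S0|/set0P S0] := eqVneq row_unit_sphere set0.
  exists 1 => //; apply: qform_ge_of_sphere => y /in_row_unit_sphere.
  by rewrite S0 inE.
have [ym /set_mem ym1 ymin] := compact_EVT_min S0 compact_row_unit_sphere
  (continuous_subspaceT (@continuous_qform_trmx M)).
exists (qform M ym^T).
  by apply: Mpos; apply: contra_eqN ym1 => /eqP->; rewrite enorm0 eq_sym oner_eq0.
apply: qform_ge_of_sphere => y /in_row_unit_sphere/ymin.
by rewrite trmxK.
Qed.

Lemma qform_ub M : exists2 c, 0 < c & forall x, qform M x <= c * enorm x ^+ 2.
Proof.
have [S0|/set0P S0] := eqVneq row_unit_sphere set0.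
  exists 1 => //; apply: qform_le_of_sphere => y /in_row_unit_sphere.
  by rewrite S0 inE.
have [yM _ ymax] := compact_EVT_max S0 compact_row_unit_sphere
  (continuous_subspaceT (@continuous_qform_trmx M)).
exists (Num.max 1 (qform M yM^T)); first by rewrite lt_max ltr01.
apply: qform_le_of_sphere => y /in_row_unit_sphere/ymax.
by rewrite trmxK le_max orbC => ->.
Qed.

End QuadraticForm.

Lemma qform_mulmx (R : realType) (n m : nat) (G : 'M[R]_m) (C : 'M[R]_(n, m))
    (x : 'cV[R]_n) :
  qform (C *m G *m C^T) x = qform G (C^T *m x).
Proof. by rewrite /qform trmx_mul trmxK !mulmxA. Qed.

Section QuadraticDecay.
Variables (R : realType) (n : nat).

Lemma is_derive_coord (X : R -> 'cV[R]_n) t i :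
  derivable X t 1 -> is_derive t 1 (fun s => X s i 0) ('D_1 X t i 0).
Proof.
move=> dX; rewrite derive_mx// mxE; apply: derivableP.
exact: (proj1 (derivable_mxP X t 1) dX i 0).
Qed.

Lemma is_derive_qform (M : 'M[R]_n) (X : R -> 'cV[R]_n) t :
  M^T = M -> derivable X t 1 ->
  is_derive t 1 (qform M \o X) (2 * ((X t)^T *m M *m 'D_1 X t) 0 0).
Proof.
move=> MT dX; set D := 'D_1 X t.
have dXij i j : is_derive t 1 (fun s => X s i 0 * M i j * X s j 0)
    (D i 0 * M i j * X t j 0 + X t i 0 * M i j * D j 0).
  have -> : (fun s => X s i 0 * M i j * X s j 0) =
      (M i j \*: (fun s => X s i 0)) * (fun s => X s j 0).
    by apply/funext => s /=; rewrite [_ * M i j]mulrC.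
  apply: is_derive_eq.
    exact: is_deriveM (is_deriveZ (M i j) (is_derive_coord i dX)) (is_derive_coord j dX).
  rewrite /= /GRing.scale /=; ring.
have -> : qform M \o X = \sum_i \sum_j (fun s => X s i 0 * M i j * X s j 0).
  apply/funext => s; rewrite /= qformE fct_sumE.
  by apply: eq_bigr => i _; rewrite fct_sumE.
apply: (is_derive_eq (is_derive_sum (fun i => is_derive_sum (dXij i)))).
under eq_bigr do rewrite big_split.
by rewrite big_split /= -!form_mxE (form_mx_sym _ _ MT) mulr_natl mulr2n.
Qed.

Lemma is_derive_expRM (c s : R) : is_derive s 1 (fun u => expR (c * u)) (expR (c * s) * c).
Proof.
have := is_derive1_comp (is_derive_expR (c * s)) (is_deriveZ c (is_derive_id s 1)).
by rewrite [c%:A]mulr1.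
Qed.

Lemma qform_exp_decay (f : 'cV[R]_n -> 'cV[R]_n) (P : 'M[R]_n) (c : R) X :
  P^T = P -> (forall x, 2 * (x^T *m P *m f x) 0 0 <= - c * qform P x) ->
  is_solution f X -> forall t, 0 <= t -> qform P (X t) <= expR (- (c * t)) * qform P (X 0).
Proof.
move=> PT Pf [cX dX] t t0.
pose W := (fun s => expR (c * s)) * (qform P \o X).
have dW (s : R) : 0 < s -> is_derive s 1 W
    (expR (c * s) * (2 * ((X s)^T *m P *m f (X s)) 0 0 + c * qform P (X s))).
  move=> s0; have [dXs DXs] := dX s s0.
  apply: is_derive_eq (is_deriveM (is_derive_expRM c s) (is_derive_qform PT dXs)) _.
  by rewrite DXs /GRing.scale /=; ring.
have cW : {within `[0, +oo[, continuous W}.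
  have cE : {within `[0, +oo[, continuous (fun s => expR (c * s))}.
    apply/continuous_subspaceT; rewrite (_ : (fun s => _) = expR \o *%R c)//.
    by move=> s; apply: continuous_comp; [exact: mulrl_continuous | exact: continuous_expR].
  have cV : {within `[0, +oo[, continuous (qform P \o X)}.
    move=> s; apply: (@continuous_comp _ _ _ (X : subspace `[0, +oo[ -> _)).
      exact: cX.
    exact: continuous_qform.
  move=> s; exact: (@continuousM _ _ ((fun s => expR (c * s)) : subspace `[0, +oo[ -> R)
    (qform P \o X) s (cE s) (cV s)).
have W_nincr : W t <= W 0.
  apply: ler0_derive1_nincry cW _ _ _ t0 => // s; rewrite in_itv /= andbT => s0.
    exact: (@ex_derive _ _ _ _ _ _ _ (dW s s0)).
  rewrite derive1E (@derive_val _ _ _ _ _ _ _ (dW s s0)) mulr_ge0_le0 ?expR_ge0//.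
  by rewrite -lerBrDr sub0r -mulNr Pf.
move: W_nincr; rewrite /W mulrfctE /= mulr0 expR0 mul1r => Wt.
have -> : qform P (X t) = expR (- (c * t)) * (expR (c * t) * qform P (X t)).
  by rewrite mulrA [expR (- _) * _]mulrC expRxMexpNx_1 mul1r.
by apply: ler_wpM2l; [exact: expR_ge0 | exact: Wt].
Qed.

End QuadraticDecay.

Lemma cvgr_expRM (R : realType) (c : R) : 0 < c -> expR (- (c * t)) @[t --> +oo] --> 0.
Proof.
move=> c0; apply: (@cvg_comp _ _ _ (fun t => c * t) (fun x => expR (- x)) _ _ _ _ (@cvgr_expR R)).
apply/cvgryPge => A; near=> t.
have : A / c <= t by near: t; apply: nbhs_pinfty_ge; exact: num_real.
by rewrite ler_pdivrMr// mulrC.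
Unshelve. all: end_near.
Qed.

Section ExponentialStability.
Variables (R : realType) (n : nat).
Implicit Types (f : 'cV[R]_n -> 'cV[R]_n) (P Q : 'M[R]_n).

Definition exponentially_stable f : Prop :=
  exists2 c : R, 0 < c & exists2 K : R, 0 < K &
    forall X, is_solution f X ->
      forall t, 0 <= t -> enorm (X t) <= K * expR (- (c * t)) * enorm (X 0).

Lemma exponentially_stable_asymptotically_stable f :
  f 0 = 0 -> exponentially_stable f -> asymptotically_stable f.
Proof.
move=> f0 [c c0 [K K0 decay]]; split=> //; split.
  move=> eps eps0; exists (eps / K) => [|X sX X0 t t0]; first by rewrite divr_gt0.
  apply: le_lt_trans (decay X sX t t0) _.
  have e1 : expR (- (c * t)) <= 1 by rewrite expR_le1 oppr_le0 mulr_ge0// ltW.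
  rewrite -mulrA -ltr_pdivlMl// mulrC (mulrC K^-1).
  by apply: le_lt_trans X0; rewrite ler_piMr ?enorm_ge0.
exists 1 => // X sX _.
apply: (@squeeze_cvgr _ _ _ _ (cst 0) (fun t => K * expR (- (c * t)) * enorm (X 0))).
- near=> t; rewrite enorm_ge0 decay//.
- exact: cvg_cst.
- rewrite [X in _ --> X](_ : _ = K * 0 * enorm (X 0)); last by rewrite mulr0 mul0r.
  by apply: cvgM; [apply: cvgM; [exact: cvg_cst | exact: cvgr_expRM] | exact: cvg_cst].
Unshelve. all: end_near.
Qed.

Lemma quadratic_lyapunov_exponentially_stable f P Q :
  posdef P -> posdef Q -> (forall x, 2 * (x^T *m P *m f x) 0 0 <= - qform Q x) ->
  exponentially_stable f.
Proof.
move=> Ppd Qpd Pf.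
have [q q0 Qq] := posdef_qform_lb Qpd.
have [a a0 Pa] := posdef_qform_lb Ppd.
have [b b0 Pb] := qform_ub P.
pose c := q / b; have c0 : 0 < c by rewrite divr_gt0.
have qE : q = c * b by rewrite divfK ?gt_eqF.
have Pfc x : 2 * (x^T *m P *m f x) 0 0 <= - c * qform P x.
  apply: le_trans (Pf x) _; rewrite mulNr lerN2.
  by apply: le_trans _ (Qq x); rewrite qE -mulrA ler_pM2l// Pb.
exists (c / 2); first by rewrite divr_gt0.
exists (Num.sqrt (b / a)); first by rewrite sqrtr_gt0 divr_gt0.
move=> X sX t t0.
have sq_decay : enorm (X t) ^+ 2 <= b / a * expR (- (c * t)) * enorm (X 0) ^+ 2.
  rewrite -(ler_pM2l a0); apply: le_trans (Pa (X t)) _.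
  apply: le_trans (qform_exp_decay Ppd.1 Pfc sX t0) _.
  have -> : a * (b / a * expR (- (c * t)) * enorm (X 0) ^+ 2) =
      expR (- (c * t)) * (b * enorm (X 0) ^+ 2) by field; rewrite gt_eqF.
  by apply: ler_wpM2l; [exact: expR_ge0 | exact: Pb].
have e2 : expR (- (c / 2 * t)) ^+ 2 = expR (- (c * t)).
  by rewrite -expRM_natl; congr expR; field.
have rhs_ge0 : 0 <= Num.sqrt (b / a) * expR (- (c / 2 * t)) * enorm (X 0).
  by rewrite !mulr_ge0 ?sqrtr_ge0 ?expR_ge0 ?enorm_ge0.
rewrite -(ler_pXn2r (n := 2)) ?nnegrE ?enorm_ge0//.
by rewrite !exprMn (sqr_sqrtr (divr_ge0 (ltW b0) (ltW a0))) e2.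
Qed.

End ExponentialStability.

Section RiccatiFeedback.
Variables (R : realType) (n p : nat).

Lemma riccati_feedback_form (A P Q : 'M[R]_n) (B : 'M[R]_(n, p)) (G S : 'M[R]_p)
    (x : 'cV[R]_n) :
  P^T = P -> Q + A^T *m P + P *m A - P *m B *m G *m B^T *m P = 0 ->
  let z := B^T *m P *m x in
  2 * (x^T *m P *m (A *m x + B *m - ((G + S) *m B^T *m P *m x))) 0 0 =
  - qform Q x - qform G z - 2 * qform S z.
Proof.
move=> PT ARE z.
have PA_sym : qform (P *m A) x *+ 2 = qform (P *m B *m G *m B^T *m P) x - qform Q x.
  rewrite mulr2n -{1}qform_trmx -qformD trmx_mul PT.
  move/eqP: ARE; rewrite subr_eq0 => /eqP <-.
  by rewrite -qformN -qformD -(addrA Q) (addrC Q) addrK.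
have PBGBP : qform (P *m B *m G *m B^T *m P) x = qform G z.
  have -> : P *m B *m G *m B^T *m P = P *m B *m G *m (P *m B)^T.
    by rewrite trmx_mul PT !mulmxA.
  by rewrite qform_mulmx trmx_mul PT.
have xPBu : (x^T *m P *m (B *m - ((G + S) *m B^T *m P *m x))) 0 0 = - qform (G + S) z.
  have xPB : x^T *m P *m B = z^T by rewrite /z !trmx_mul trmxK PT mulmxA.
  by rewrite !mulmxN mxE mulmxA xPB /qform /z !mulmxA.
have xPAx : (x^T *m P *m (A *m x)) 0 0 = qform (P *m A) x by rewrite /qform !mulmxA.
rewrite mulmxDr mxE xPBu xPAx mulrDr mulr_natl PA_sym PBGBP qformD.
ring.
Qed.

Lemma Sgain_qform_ge0 (k1 k2 k3 k4 : 'I_p -> R) (x : 'cV[R]_n) z :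
  (forall i, 0 <= k1 i) -> 0 <= qform (Sgain k1 k2 k3 k4 x) z.
Proof.
move=> k1_ge0; apply: qform_diag_mx_ge0 => i.
by rewrite mxE mulr_ge0 ?sqr_ge0// mulr_ge0 ?expR_ge0.
Qed.

Lemma riccati_feedback_dissipation (A P Q : 'M[R]_n) (B : 'M[R]_(n, p)) (Rw : 'M[R]_p)
    (k1 k2 k3 k4 : 'I_p -> R) (x : 'cV[R]_n) :
  posdef Rw -> P^T = P ->
  Q + A^T *m P + P *m A - P *m B *m invmx Rw *m B^T *m P = 0 ->
  (forall i, 0 <= k1 i) ->
  2 * (x^T *m P *m (A *m x + B *m feedback Rw B P k1 k2 k3 k4 x)) 0 0 <= - qform Q x.
Proof.
move=> Rpd PT ARE k1_ge0; rewrite /feedback (riccati_feedback_form (Sgain k1 k2 k3 k4 x) x PT ARE).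
have := posdef_qform_invmx_ge0 (B^T *m P *m x) Rpd.
have := Sgain_qform_ge0 k2 k3 k4 x (B^T *m P *m x) k1_ge0.
lra.
Qed.

End RiccatiFeedback.

Theorem proposition1 (R : realType) (n p m : nat)
  (A : 'M[R]_n) (B : 'M[R]_(n, p)) (h : 'cV[R]_n -> 'cV[R]_m)
  (Q : 'M[R]_n) (Rw : 'M[R]_p) (P : 'M[R]_n)
  (k1 k2 k3 k4 : 'I_p -> R) :
  controllable A B ->
  posdef Q -> posdef Rw -> posdef P ->
  Q + A^T *m P + P *m A - P *m B *m invmx Rw *m B^T *m P = 0 ->
  (forall i, 0 <= k1 i) ->
  (forall i, 0 <= k4 i /\ k4 i < pi / 2) ->
  asymptotically_stable
    (fun x : 'cV[R]_n => A *m x + B *m feedback Rw B P k1 k2 k3 k4 x).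
Proof.
move=> _ Qpd Rpd Ppd ARE k1_ge0 _.
apply: exponentially_stable_asymptotically_stable.
  by rewrite /feedback !mulmx0 oppr0 mulmx0 addr0.
apply: (quadratic_lyapunov_exponentially_stable Ppd Qpd) => x.
exact: riccati_feedback_dissipation Rpd Ppd.1 ARE k1_ge0.
Qed.
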